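(* Let $f\in Lip_d(I)$ and let $f^\alpha_b$ be the non-stationary $\alpha$-fractal function of $f$ with respect to the partition $\Delta$, the scaling functions $\alpha_{i,r}$ and the base functions $b_r=L_r f$ (setting described in the context). Then for every $j\in\mathbb{N}$, $$\|f^\alpha_b-L_j(f)\|_\infty\le\frac{1}{1-\|\alpha\|_\infty}\sup_{r\in\mathbb{N}}\|f-L_r(f)\|_\infty .$$
   Context: Setting: $I=[x_0,x_N]$ with partition $\Delta: x_0<x_1<\dots<x_N$, $I_i=[x_{i-1},x_i]$, $l_i:I\to I_i$ the increasing affine bijection $l_i(x)=\frac{x_i-x_{i-1}}{x_N-x_0}x+\frac{x_Nx_{i-1}-x_0x_i}{x_N-x_0}$, and $Q_i=l_i^{-1}$. Scaling functions $\alpha_{i,r}:I\to\mathbb{R}$ ($i=1,\dots,N$, $r\in\mathbb{N}$) are continuous with $\|\alpha\|_\infty:=\sup_{r}\max_i\|\alpha_{i,r}\|_\infty<1$. $Lip_d(I)$ ($0<d\le1$) is the space of real functions $g$ on $I$ with $\sup_{x\ne y}|g(x)-g(y)|/|x-y|^d<\infty$, regarded as a subset of $C(I)$ with the supremum norm. $L_r:Lip_d(I)\to Lip_d(I)$ ($r\in\mathbb{N}$) are operators (not necessarily linear) with $(L_rg)(x_0)=g(x_0)$, $(L_rg)(x_N)=g(x_N)$ for all $g$, and $\sup_r\|L_r\|_\infty<\infty$, where $\|L_r\|_\infty=\sup_{g\ne0}\|L_rg\|_\infty/\|g\|_\infty$. Non-stationary $\alpha$-fractal function: for $f\in C(I)$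 and base functions $b_r\in C(I)$ with $b_r(x_0)=f(x_0)$, $b_r(x_N)=f(x_N)$, $\sup_r\|b_r\|_\infty<\infty$, let $C_f(I)=\{g\in C(I):g(x_0)=f(x_0),g(x_N)=f(x_N)\}$ and $T^{\alpha_r}:C_f(I)\to C_f(I)$, $(T^{\alpha_r}g)(x)=f(x)+\alpha_{i,r}(Q_i(x))(g-b_r)(Q_i(x))$ for $x\in I_i$. For every $g\in C_f(I)$, $T^{\alpha_1}\circ\cdots\circ T^{\alpha_r}g$ converges uniformly as $r\to\infty$ to a function independent of $g$; this limit is the non-stationary $\alpha$-fractal function. Here $f^\alpha_b$ denotes it for the choice $b_r=L_rf$. *)

From HB Require Import structures.
From mathcomp Require Import all_boot all_order all_algebra.
From mathcomp Require Import all_classical all_reals all_analysis.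
Set Implicit Arguments. Unset Strict Implicit. Unset Printing Implicit Defensive.
Import Order.TTheory GRing.Theory Num.Theory.
Import numFieldNormedType.Exports.
Local Open Scope classical_set_scope.
Local Open Scope ring_scope.

Section NSFractal.
Variable R : realType.

Definition Icc (a b : R) : set R := [set t | a <= t <= b].

Definition supnorm (a b : R) (g : R -> R) : R := sup [set `|g t| | t in Icc a b].

Definition LipD (d a b : R) (g : R -> R) : Prop :=
  exists C : R, forall s t, s \in Icc a b -> t \in Icc a b -> s != t ->
    `|g s - g t| / (`|s - t| `^ d) <= C.

(* affine maps l_i and Q_i = l_i^{-1} for the partition x_0 < ... < x_N *)
Definition laff (x : nat -> R) (N i : nat) (t : R) : R :=
  (x i - x i.-1) / (x N - x 0%N) * t + (x N * x i.-1 - x 0%N * x i) / (x N - x 0%N).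
Definition Qaff (x : nat -> R) (N i : nat) (t : R) : R :=
  ((x N - x 0%N) * t - (x N * x i.-1 - x 0%N * x i)) / (x i - x i.-1).

(* index i in {1..N} with t in I_i = [x_{i-1}, x_i] (first one at breakpoints) *)
Definition seg (x : nat -> R) (N : nat) (t : R) : nat :=
  (\sum_(1 <= k < N) nat_of_bool (x k < t)%R)%N.+1.

Definition Top (x : nat -> R) (N : nat) (alpha : nat -> nat -> R -> R)
  (f : R -> R) (b : nat -> R -> R) (r : nat) (g : R -> R) : R -> R :=
  fun t => let i := seg x N t in
    f t + alpha i r (Qaff x N i t) * (g (Qaff x N i t) - b r (Qaff x N i t)).

(* T^{alpha_1} o ... o T^{alpha_r} g *)
Definition Tcomp (x : nat -> R) (N : nat) (alpha : nat -> nat -> R -> R)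
  (f : R -> R) (b : nat -> R -> R) (r : nat) (g : R -> R) : R -> R :=
  foldr (fun k h => Top x N alpha f b k h) g (iota 1 r).

Definition alpha_set (x : nat -> R) (N : nat) (alpha : nat -> nat -> R -> R) : set R :=
  [set y | exists i r, (1 <= i <= N)%N /\ (0 < r)%N /\ y = supnorm (x 0%N) (x N) (alpha i r)].

End NSFractal.

(** On [I], [|T^{alpha_r} h - f| = |alpha_{i,r}| |h - L_r f|] at the point
    [Q_i t], which is at most [a (|h - f| + S)] with [a = ||alpha||_oo] and
    [S = sup_r ||f - L_r f||_oo].  Hence the ball of radius [B = a S / (1 - a)]
    around [f], the solution of [a (B + S) = B], is invariant under every
    [T^{alpha_r}].  Since a Lipschitz-[d] function is continuous, [f] itself is
    an admissible starting point of the iteration; all iterates stay in the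
    ball, hence so does their uniform limit [f^alpha_b], and the triangle
    inequality gives [||f^alpha_b - L_j f|| <= B + S = S / (1 - a)]. *)

From HB Require Import structures.
From mathcomp Require Import all_boot all_order all_algebra.
From mathcomp Require Import all_classical all_reals all_analysis.
From mathcomp Require Import zify ring.
Import Order.TTheory GRing.Theory Num.Theory.
Import numFieldNormedType.Exports.
Local Open Scope classical_set_scope.
Local Open Scope ring_scope.
Set Implicit Arguments. Unset Strict Implicit.

Section Interval.
Variables (R : realType) (a b : R).

Lemma norm_le_supnorm (g : R -> R) t :
  has_ubound [set `|g s| | s in Icc a b] -> Icc a b t -> `|g t| <= supnorm a b g.
Proof. by move=> gub At; apply: ub_le_sup => //; exists t. Qed.

Lemma supnorm_le (g : R -> R) B : a <= b ->
  (forall t, Icc a b t -> `|g t| <= B) -> supnorm a b g <= B.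
Proof.
move=> ab gB; apply: ge_sup; first by exists `|g a|, a => //; rewrite /Icc /= lexx ab.
by move=> _ [t At <-]; exact: gB.
Qed.

Lemma Icc_itv : Icc a b = `[a, b]%classic.
Proof. by apply/seteqP; split=> t; rewrite /Icc /= in_itv. Qed.

Lemma continuous_has_ubound_norm (g : R -> R) : a <= b ->
  {within Icc a b, continuous g} -> has_ubound [set `|g t| | t in Icc a b].
Proof.
rewrite Icc_itv => ab gC.
have [cmax _ gmax] := EVT_max ab gC; have [cmin _ gmin] := EVT_min ab gC.
exists (Num.max `|g cmax| `|g cmin|) => _ [t /= At <-].
have /gmax tmax := At; have /gmin tmin := At.
rewrite le_max; case: (lerP 0 (g t)) => g0.
  by rewrite ger0_norm // (le_trans tmax) ?ler_norm.
rewrite ltr0_norm //; apply/orP; right.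
by rewrite -normrN (le_trans _ (ler_norm _)) ?lerN2.
Qed.

Lemma norm_le_sup_supnorm (g : R -> R) (E : set R) t :
  a <= b -> {within Icc a b, continuous g} ->
  has_ubound E -> E (supnorm a b g) -> Icc a b t -> `|g t| <= sup E.
Proof.
move=> ab gC Eub Eg At; apply: le_trans (ub_le_sup Eub Eg).
exact/norm_le_supnorm/At/continuous_has_ubound_norm.
Qed.

Lemma LipD_continuous (d : R) (g : R -> R) :
  0 < d -> LipD d a b g -> {within Icc a b, continuous g}.
Proof.
move=> d0 [C hC]; apply/subspace_continuousP => s As.
apply/cvgrPdist_le => e e0.
pose c := e / (`|C| + 1).
have c0 : 0 < c by rewrite divr_gt0 // ltr_wpDl.
pose delta := c `^ d^-1.
have delta0 : 0 < delta by rewrite powR_gt0.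
rewrite near_withinE; near=> t.
have st_delta : `|s - t| < delta by near: t; apply: cvgr_dist_lt => //; exact: cvg_id.
move=> At.
have [-> | ts] := eqVneq s t; first by rewrite subrr normr0 ltW.
have st0 : 0 < `|s - t| `^ d by rewrite powR_gt0 // normr_gt0 subr_eq0.
have lip_st := hC s t (mem_set As) (mem_set At) ts.
have st_c : `|s - t| `^ d <= c.
  have -> : c = delta `^ d by rewrite -powRrM mulVf ?gt_eqF // powRr1 // ltW.
  apply: ge0_ler_powR; rewrite ?nnegrE ?powR_ge0 ?(ltW d0) //; exact: ltW.
move: lip_st; rewrite ler_pdivrMr // => /le_trans; apply.
apply: le_trans (_ : `|C| * c <= e).
  by apply: le_trans (ler_wpM2l (normr_ge0 C) st_c); rewrite ler_wpM2r ?ler_norm ?ltW.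
by rewrite /c mulrA ler_pdivrMr ?ltr_wpDl // mulrC ler_pM2l // lerDl.
Unshelve. all: by end_near.
Qed.

End Interval.

Lemma dist_le_of_approx (R : realType) (u : nat -> R) (l c B : R) :
  (forall e, 0 < e -> exists n, `|u n - l| < e) ->
  (forall n, `|u n - c| <= B) -> `|l - c| <= B.
Proof.
move=> approx uB; apply/ler_addgt0Pr => e /approx [n ulte].
rewrite [B + e]addrC; apply: le_trans _ (ltW (ltr_leD ulte (uB n))).
by rewrite [`|u n - l|]distrC ler_distD.
Qed.

Section Partition.
Variables (R : realType) (N : nat) (x : nat -> R).
Hypothesis x_incr : forall k, (k < N)%N -> x k < x k.+1.

Lemma breakpoint_lt m n : (m < n)%N -> (n <= N)%N -> x m < x n.
Proof.
elim: n => // n IH; rewrite ltnS leq_eqVlt => /orP[/eqP -> | mn] nN.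
  exact: x_incr.
exact: lt_trans (IH mn (ltnW nN)) (x_incr nN).
Qed.

Lemma breakpoint_le m n : (m <= n)%N -> (n <= N)%N -> x m <= x n.
Proof. by rewrite leq_eqVlt => /orP[/eqP -> // | mn] nN; exact/ltW/breakpoint_lt. Qed.

Let below (t : R) := (\sum_(1 <= k < N) nat_of_bool (x k < t)%R)%N.

Lemma below_le t : (below t <= N.-1)%N.
Proof.
apply: (@leq_trans (\sum_(1 <= k < N) 1)%N).
  by apply: leq_sum => k _; case: (x k < t).
by rewrite sum_nat_const_nat muln1 subn1.
Qed.

Lemma seg_range t : (0 < N)%N -> (1 <= seg x N t <= N)%N.
Proof. by move=> N0; have := below_le t; rewrite /seg -/(below t); lia. Qed.

Lemma seg_lower t : x 0%N <= t -> x (seg x N t).-1 <= t.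
Proof.
rewrite /seg -/(below t) /= => x0t.
have bN := below_le t.
case b0 : (below t) => [|c] //; rewrite -b0.
case: (lerP (x (below t)) t) => // tb; exfalso.
(* Otherwise no breakpoint from index [below t] on lies below [t]. *)
suff : (below t <= c)%N by rewrite b0 ltnn.
rewrite {1}/below (@big_cat_nat _ _ _ (below t)) /=; [|lia|lia].
rewrite [X in (_ + X)%N]big_nat_cond [X in (_ + X)%N]big1 ?addn0; last first.
  move=> k /andP[/andP[bk kN] _].
  have : x (below t) <= x k by apply: breakpoint_le => //; lia.
  by move=> h; rewrite ltNge (ltW (lt_le_trans tb h)).
apply: (@leq_trans (\sum_(1 <= k < below t) 1)%N).
  by apply: leq_sum => k _; case: (x k < t).
by rewrite sum_nat_const_nat muln1 b0 subn1.
Qed.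

Lemma seg_upper t : (0 < N)%N -> t <= x N -> t <= x (seg x N t).
Proof.
rewrite /seg -/(below t) => N0 tN.
have bN := below_le t.
case: (ltnP (below t).+1 N) => bN'; last by have -> : (below t).+1 = N by lia.
case: (lerP t (x (below t).+1)) => // tb; exfalso.
(* Otherwise all of [x 1], ..., [x (below t).+1] lie below [t]. *)
suff : ((below t).+1 <= below t)%N by rewrite ltnn.
rewrite {2}/below (@big_cat_nat _ _ _ (below t).+2) /=; [|lia|lia].
apply: leq_trans (leq_addr _ _).
rewrite -{1}[(below t).+1](@subn1 (below t).+2) -[(_ - 1)%N]muln1.
rewrite -sum_nat_const_nat big_nat_cond [X in (_ <= X)%N]big_nat_cond.
apply/eq_leq/eq_bigr => k /andP[/andP[k1 kb] _].
have : x k <= x (below t).+1 by apply: breakpoint_le => //; lia.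
by move=> h; rewrite (le_lt_trans h tb).
Qed.

Lemma Qaff_in_Icc i t : (1 <= i <= N)%N -> x i.-1 <= t <= x i ->
  Icc (x 0%N) (x N) (Qaff x N i t).
Proof.
move=> /andP[i1 iN] /andP[lo hi].
have len_i : 0 < x i - x i.-1 by rewrite subr_gt0 breakpoint_lt //; lia.
have len_I : 0 <= x N - x 0%N by rewrite subr_ge0 breakpoint_le.
apply/andP; split.
  have -> : Qaff x N i t = x 0%N + (x N - x 0%N) * (t - x i.-1) / (x i - x i.-1).
    by rewrite /Qaff; field; rewrite gt_eqF.
  by rewrite lerDl divr_ge0 ?(ltW len_i) // mulr_ge0 // subr_ge0.
have -> : Qaff x N i t = x N - (x N - x 0%N) * (x i - t) / (x i - x i.-1).
  by rewrite /Qaff; field; rewrite gt_eqF.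
by rewrite gerDl oppr_le0 divr_ge0 ?(ltW len_i) // mulr_ge0 // subr_ge0.
Qed.

Lemma Qaff_seg_in_Icc t : (0 < N)%N -> Icc (x 0%N) (x N) t ->
  Icc (x 0%N) (x N) (Qaff x N (seg x N t) t).
Proof.
move=> N0 /andP[lo hi].
by apply: Qaff_in_Icc; rewrite ?seg_range ?seg_lower ?seg_upper.
Qed.

End Partition.

Section InvariantBall.
Variables (R : realType) (N : nat) (x : nat -> R).
Variables (alpha : nat -> nat -> R -> R) (f : R -> R) (b : nat -> R -> R).
Variables (a S B : R).
Hypothesis N_gt0 : (0 < N)%N.
Hypothesis x_incr : forall k, (k < N)%N -> x k < x k.+1.
Local Notation I := (Icc (x 0%N) (x N)).
Hypothesis alpha_le : forall i r t, (1 <= i <= N)%N -> (0 < r)%N -> I t ->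
  `|alpha i r t| <= a.
Hypothesis base_dist : forall r t, (0 < r)%N -> I t -> `|f t - b r t| <= S.
Hypothesis radius_invariant : a * (B + S) <= B.

Lemma Top_dist_le r (h : R -> R) : (0 < r)%N ->
  (forall s, I s -> `|h s - f s| <= B) ->
  forall t, I t -> `|Top x N alpha f b r h t - f t| <= B.
Proof.
move=> r_gt0 hB t It; have Iq := Qaff_seg_in_Icc x_incr N_gt0 It.
rewrite /Top addrAC subrr add0r normrM; apply: le_trans radius_invariant.
apply: ler_pM => //; first exact: alpha_le (seg_range _ _ N_gt0) r_gt0 Iq.
apply: le_trans (ler_distD (f _) _ _) _.
exact: lerD (hB _ Iq) (base_dist r_gt0 Iq).
Qed.

Lemma foldr_Top_dist_le m r (h : R -> R) : (0 < m)%N ->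
  (forall s, I s -> `|h s - f s| <= B) ->
  forall t, I t -> `|foldr (Top x N alpha f b) h (iota m r) t - f t| <= B.
Proof.
move=> + hB; elim: r m => [|r IH] m m_gt0 //=.
exact: Top_dist_le m_gt0 (IH m.+1 isT).
Qed.

Lemma Tcomp_dist_le r (h : R -> R) :
  (forall s, I s -> `|h s - f s| <= B) ->
  forall t, I t -> `|Tcomp x N alpha f b r h t - f t| <= B.
Proof. exact: foldr_Top_dist_le. Qed.

Lemma uniform_limit_dist_le (fa : R -> R) : 0 <= B ->
  (forall e, 0 < e -> exists r0 : nat, forall r, (r0 <= r)%N ->
     forall t, t \in I -> `|Tcomp x N alpha f b r f t - fa t| < e) ->
  forall t, I t -> `|fa t - f t| <= B.
Proof.
move=> B_ge0 approx t It.
apply: (dist_le_of_approx (u := fun r => Tcomp x N alpha f b r f t)).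
  by move=> e /approx [r0 close]; exists r0; exact: close (leqnn r0) _ (mem_set It).
by move=> r; apply: Tcomp_dist_le It => s _; rewrite subrr normr0.
Qed.

End InvariantBall.

Theorem mainTheorem2 (R : realType) (N : nat) (x : nat -> R) (d : R)
  (alpha : nat -> nat -> R -> R) (L : nat -> (R -> R) -> (R -> R))
  (f fa : R -> R) :
  (0 < N)%N ->
  (forall k, (k < N)%N -> x k < x k.+1) ->
  0 < d -> d <= 1 ->
  (* scaling functions *)
  (forall i r, (1 <= i <= N)%N -> (0 < r)%N ->
     {within Icc (x 0%N) (x N), continuous (alpha i r : R -> R)}) ->
  has_ubound (alpha_set x N alpha) ->
  sup (alpha_set x N alpha) < 1 ->
  (* operators L_r : Lip_d(I) -> Lip_d(I) *)
  (forall r g, (0 < r)%N -> LipD d (x 0%N) (x N) g -> LipD d (x 0%N) (x N) (L r g)) ->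
  (forall r g, (0 < r)%N -> LipD d (x 0%N) (x N) g ->
     L r g (x 0%N) = g (x 0%N) /\ L r g (x N) = g (x N)) ->
  (exists M : R, forall r g, (0 < r)%N -> LipD d (x 0%N) (x N) g ->
     supnorm (x 0%N) (x N) g != 0 ->
     supnorm (x 0%N) (x N) (L r g) / supnorm (x 0%N) (x N) g <= M) ->
  (* f in Lip_d(I) *)
  LipD d (x 0%N) (x N) f ->
  (* fa = f^alpha_b with b_r = L_r f : uniform limit of T^{alpha_1} o ... o T^{alpha_r} g
     for every g in C_f(I) *)
  (forall g, {within Icc (x 0%N) (x N), continuous (g : R -> R)} ->
     g (x 0%N) = f (x 0%N) -> g (x N) = f (x N) ->
     forall e, 0 < e -> exists r0 : nat, forall r, (r0 <= r)%N -> forall t,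
       t \in Icc (x 0%N) (x N) ->
       `|Tcomp x N alpha f (fun r => L r f) r g t - fa t| < e) ->
  forall j, (0 < j)%N ->
    (* if sup_r ||f - L_r f|| = +oo the inequality is trivial *)
    has_ubound [set y | exists r, (0 < r)%N /\ y = supnorm (x 0%N) (x N) (f \- L r f)] ->
    supnorm (x 0%N) (x N) (fa \- L j f) <=
      (1 - sup (alpha_set x N alpha))^-1 *
      sup [set y | exists r, (0 < r)%N /\ y = supnorm (x 0%N) (x N) (f \- L r f)].
Proof.
move=> N_gt0 x_incr d_gt0 _ alpha_cont alpha_ub alpha_lt1 L_lip _ _ f_lip fa_lim
  j j_gt0 dist_ub.
set a := sup _ in alpha_lt1 *; set S := sup _.
have x0_le_xN : x 0%N <= x N := breakpoint_le x_incr (leq0n N) (leqnn N).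
have x0_in_I : Icc (x 0%N) (x N) (x 0%N) by rewrite /Icc /= lexx x0_le_xN.
have f_cont := LipD_continuous d_gt0 f_lip.
have alpha_le i r t : (1 <= i <= N)%N -> (0 < r)%N -> Icc (x 0%N) (x N) t ->
    `|alpha i r t| <= a.
  move=> iN r_gt0.
  apply: norm_le_sup_supnorm x0_le_xN (alpha_cont _ _ iN r_gt0) alpha_ub _.
  by exists i, r.
have base_dist r t : (0 < r)%N -> Icc (x 0%N) (x N) t -> `|f t - L r f t| <= S.
  move=> r_gt0; have Lf_cont := LipD_continuous d_gt0 (L_lip r f r_gt0 f_lip).
  apply: norm_le_sup_supnorm x0_le_xN (within_continuousB f_cont Lf_cont) dist_ub _.
  by exists r.
have a_ge0 : 0 <= a by apply: le_trans (alpha_le 1%N 1%N _ _ _ x0_in_I); rewrite ?N_gt0.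
have S_ge0 : 0 <= S by apply: le_trans (base_dist 1%N _ _ x0_in_I).
have a_lt1 : 0 < 1 - a by rewrite subr_gt0.
pose B := a * S / (1 - a).
have B_ge0 : 0 <= B by rewrite /B divr_ge0 ?mulr_ge0 // ltW.
have B_add_S : B + S = (1 - a)^-1 * S by rewrite /B; field; rewrite gt_eqF.
have radius_invariant : a * (B + S) <= B by rewrite B_add_S mulrCA mulrC.
have fa_dist := uniform_limit_dist_le N_gt0 x_incr alpha_le base_dist
  radius_invariant B_ge0 (fa_lim f f_cont erefl erefl).
apply: (supnorm_le (g := fa \- L j f) x0_le_xN) => t It /=.
rewrite -B_add_S; apply: le_trans (ler_distD (f t) _ _) _.
exact: lerD (fa_dist t It) (base_dist j t j_gt0 It).
Qed.
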